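(* Let $m\ge1$ and for $p_1,\dots,p_m\ge0$ let $K_{p_1,\dots,p_m}$ be the complete $m$-partite graph with parts of sizes $p_1,\dots,p_m$ (two vertices adjacent iff they lie in different parts). Then $$\sum_{p_1,\dots,p_m\ge0}\mathrm{sa}(K_{p_1,\dots,p_m};t)\,\frac{x_1^{p_1}}{p_1!}\cdots\frac{x_m^{p_m}}{p_m!} = e^{t(x_1+\cdots+x_m)}\,\frac{(1-m)+\cosh x_1+\cdots+\cosh x_m}{\cosh(x_1+\cdots+x_m)}.$$
   Context: All graphs are finite, simple and undirected. For a graph $G=(V,E)$ and $V'\subseteq V$, $G|_{V'}$ denotes the induced subgraph on $V'$. The signed a-number $\mathrm{sa}(G)$ is defined recursively: $\mathrm{sa}(G)=1$ if $G$ is the empty graph (no vertices); $\mathrm{sa}(G)=0$ if $G$ has a connected component with an odd number of vertices; otherwise $\mathrm{sa}(G)=-\sum_{V'\subsetneq V}\mathrm{sa}(G|_{V'})$. The signed a-polynomial of $G$ is $\mathrm{sa}(G;t)=\sum_{V'\subseteq V}\mathrm{sa}(G|_{V'})\,t^{|V\setminus V'|}$. *)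

From HB Require Import structures.
From mathcomp Require Import all_boot all_order all_algebra.
Set Implicit Arguments. Unset Strict Implicit. Unset Printing Implicit Defensive.
Import Order.TTheory GRing.Theory Num.Theory.
Local Open Scope ring_scope.

(* A finite simple graph is a vertex finType T with an adjacency relation e.
   Subsets S : {set T} stand for induced subgraphs G|_S. *)
Section SignedA.
Variables (T : finType) (e : rel T).

Definition restr (S : {set T}) : rel T := [rel x y | [&& x \in S, y \in S & e x y]].

Definition comp (S : {set T}) (x : T) : {set T} := [set y | connect (restr S) x y].

Definition has_odd_comp (S : {set T}) : bool := [exists x in S, odd #|comp S x|].

(* recursion with fuel; sa_rec n S is the signed a-number of G|_S whenever n >= #|S| *)
Fixpoint sa_rec (n : nat) (S : {set T}) : int :=
  match n with
  | 0 => if S == set0 then 1 else 0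
  | n.+1 => if S == set0 then 1
            else if has_odd_comp S then 0
            else - \sum_(S' : {set T} | S' \proper S) sa_rec n S'
  end.

Definition sa (S : {set T}) : int := sa_rec #|S| S.

Definition sa_poly : {poly rat} :=
  \sum_(S : {set T}) (sa S)%:~R *: 'X^(#|T| - #|S|)%N.
End SignedA.

(* complete m-partite graph K_{p_1,...,p_m}: vertices are pairs (i, k), k < p_i,
   adjacent iff they lie in different parts *)
Definition Kvert (m : nat) (p : {ffun 'I_m -> nat}) := {i : 'I_m & 'I_(p i)}.
Definition Kedge (m : nat) (p : {ffun 'I_m -> nat}) : rel (Kvert p) :=
  fun x y => tag x != tag y.

(* A multi-index p = (p_1,...,p_m); a series is its coefficient function
   (coefficient of x_1^{p_1}...x_m^{p_m}). *)
Definition mi (m : nat) := {ffun 'I_m -> nat}.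
Definition mdeg m (p : mi m) : nat := (\sum_i p i)%N.
Definition mi0 m : mi m := [ffun _ => 0%N].
Definition misub m (p q : mi m) : mi m := [ffun i => (p i - q i)%N].
Definition lowr m n (q : {ffun 'I_m -> 'I_n}) : mi m := [ffun i => nat_of_ord (q i)].

Definition fps_mul (R : pzRingType) m (f g : mi m -> R) : mi m -> R :=
  fun p => \sum_(q : {ffun 'I_m -> 'I_(mdeg p).+1} | [forall i, (q i <= p i)%N])
             f (lowr q) * g (misub p (lowr q)).

(* one step of the recursive computation of the inverse of f (f_0 a unit):
   g_p = f_0^{-1} ([p = 0] - sum_{0 < q <= p} f_q g_{p-q}) *)
Definition inv_step (R : unitRingType) m (f g : mi m -> R) : mi m -> R :=
  fun p => (f (mi0 m))^-1 *
    ((p == mi0 m)%:R -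
     \sum_(q : {ffun 'I_m -> 'I_(mdeg p).+1} |
             [forall i, (q i <= p i)%N] && (lowr q != mi0 m))
        f (lowr q) * g (misub p (lowr q))).

(* multiplicative inverse of a series (coefficients of total degree d are
   determined after d+1 steps) *)
Definition fps_inv (R : unitRingType) m (f : mi m -> R) : mi m -> R :=
  fun p => iter (mdeg p).+1 (inv_step f) (fun _ => 0) p.

Definition fps_const (R : pzRingType) m (c : R) : mi m -> R :=
  fun p => if p == mi0 m then c else 0.

Definition fact_inv m (p : mi m) : rat := ((\prod_i (p i)`!)%N%:R)^-1.

(* e^{t(x_1+...+x_m)} = sum_p t^{|p|} x^p / p!   (t is the polynomial variable 'X) *)
Definition exp_tX m : mi m -> {poly rat} := fun p => fact_inv p *: 'X^(mdeg p).

Definition cosh_var m (i : 'I_m) : mi m -> {poly rat} :=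
  fun p => if [forall j, (j != i) ==> (p j == 0%N)] && ~~ odd (p i)
           then (fact_inv p)%:P else 0.

(* cosh(x_1+...+x_m) = sum_n X^n/n! [n even], X^n/n! = sum_{|p|=n} x^p/p! *)
Definition cosh_sum m : mi m -> {poly rat} :=
  fun p => if ~~ odd (mdeg p) then (fact_inv p)%:P else 0.

Definition numer m : mi m -> {poly rat} :=
  fun p => fps_const (((1 - m%:R) : rat)%:P) p + \sum_i cosh_var i p.

Definition rhs m : mi m -> {poly rat} :=
  fps_mul (fps_mul (@exp_tX m) (@numer m)) (fps_inv (@cosh_sum m)).

Definition lhs m : mi m -> {poly rat} :=
  fun p => fact_inv p *: sa_poly (@Kedge m p).

(* For a vertex set S of K_p, the induced subgraph is K_q with q the vector of
   part sizes of S, so sa(G|_S) = a_q depends on q only.  An induced K_q meeting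
   at least two parts is connected, and one meeting a single part is edgeless;
   hence K_q has an odd component iff q lives on at most one part or |q| is odd,
   and otherwise the recursion for sa says sum_(r <= q) C(q, r) a_r = 0.
   Counting subsets of given part sizes, the left-hand side is e^(t(x_1+...+x_m))
   A(x) with A = sum_q a_q x^q / q!.  The coefficient of x^p in A(x) cosh(x_1+...+x_m)
   is zero for |p| odd and (1/p!) sum_(r <= p) C(p, r) a_r otherwise, which is 1/p!
   when p lives on at most one part (only r = 0 contributes) and 0 otherwise: this
   is exactly (1 - m) + cosh x_1 + ... + cosh x_m.  Divide by cosh(x_1+...+x_m). *)

From Pilot Require Import Defs.
From HB Require Import structures.
From mathcomp Require Import all_boot all_order all_algebra.
From mathcomp Require Import zify ring.
Set Implicit Arguments. Unset Strict Implicit. Unset Printing Implicit Defensive.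
Import Order.TTheory GRing.Theory Num.Theory.
Local Open Scope ring_scope.

Section MultiIndex.
Variable m : nat.
Implicit Types (p q r s x y : mi m).

Definition mi_le r p := [forall i, (r i <= p i)%N].
Definition mi_add r s : mi m := [ffun i => (r i + s i)%N].
Definition mi_bnd n x := [forall i, (x i <= n)%N].
Definition msupp p := [set i | p i != 0%N].
Definition mbinom s r : nat := (\prod_i 'C(s i, r i))%N.

Definition ord_of_mi n x : {ffun 'I_m -> 'I_n.+1} := [ffun i => inord (x i)].

Lemma mi_leP r p : reflect (forall i, (r i <= p i)%N) (mi_le r p).
Proof. exact: forallP. Qed.

Lemma mi_bndP n x : reflect (forall i, (x i <= n)%N) (mi_bnd n x).
Proof. exact: forallP. Qed.

Lemma misubE p q i : misub p q i = (p i - q i)%N.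
Proof. by rewrite ffunE. Qed.

Lemma mi_addE p q i : mi_add p q i = (p i + q i)%N.
Proof. by rewrite ffunE. Qed.

Lemma lowr_ord_of_mi n x : mi_bnd n x -> lowr (ord_of_mi n x) = x.
Proof. by move=> /mi_bndP b; apply/ffunP=> i; rewrite !ffunE inordK // ltnS. Qed.

Lemma ord_of_mi_lowr n (q : {ffun 'I_m -> 'I_n.+1}) : ord_of_mi n (lowr q) = q.
Proof. by apply/ffunP=> i; rewrite !ffunE inord_val. Qed.

Lemma lowr_inj n : injective (@lowr m n).
Proof.
move=> q1 q2 e; apply/ffunP=> i; apply/val_inj.
by have := congr1 (fun f : mi m => f i) e; rewrite !ffunE.
Qed.

Lemma mi_le_refl p : mi_le p p.
Proof. exact/mi_leP. Qed.

Lemma mi_le0 p : mi_le (mi0 m) p.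
Proof. by apply/mi_leP=> i; rewrite ffunE. Qed.

Lemma mi_le_trans r q p : mi_le r q -> mi_le q p -> mi_le r p.
Proof. by move=> /mi_leP a /mi_leP b; apply/mi_leP=> i; exact: leq_trans (a i) (b i). Qed.

Lemma misub_le p q : mi_le (misub p q) p.
Proof. by apply/mi_leP=> i; rewrite misubE leq_subr. Qed.

Lemma misubK p q : mi_le q p -> misub p (misub p q) = q.
Proof. by move=> /mi_leP qp; apply/ffunP=> i; rewrite !misubE subKn. Qed.

Lemma misub_eq0 p q : mi_le q p -> (misub p q == mi0 m) = (q == p).
Proof.
move=> /mi_leP qp; apply/eqP/eqP=> [e|->]; last first.
  by apply/ffunP=> i; rewrite misubE ffunE subnn.
apply/ffunP=> i; apply/eqP; rewrite eqn_leq qp /= -subn_eq0.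
by have := congr1 (fun f : mi m => f i) e; rewrite misubE ffunE => ->.
Qed.

Lemma mi_bnd_le n x p : mi_le x p -> mi_bnd n p -> mi_bnd n x.
Proof. by move=> /mi_leP a /mi_bndP b; apply/mi_bndP=> i; exact: leq_trans (a i) (b i). Qed.

Lemma mi_bnd_mdeg p : mi_bnd (mdeg p) p.
Proof. by apply/mi_bndP=> i; rewrite /mdeg (bigD1 i) //= leq_addr. Qed.

Lemma mdeg_misub p q : mi_le q p -> (mdeg (misub p q) + mdeg q)%N = mdeg p.
Proof.
move=> /mi_leP le; rewrite /mdeg -big_split /=; apply: eq_bigr => i _.
by rewrite misubE subnK.
Qed.

Lemma mdeg0 : mdeg (mi0 m) = 0%N.
Proof. by rewrite /mdeg big1 // => i _; rewrite ffunE. Qed.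

Lemma mdeg_eq0 p : (mdeg p == 0%N) = (p == mi0 m).
Proof.
apply/idP/eqP=> [|->]; last by rewrite mdeg0.
rewrite /mdeg sum_nat_eq0 => /forallP h; apply/ffunP=> i; rewrite ffunE.
by apply/eqP; have := h i; rewrite implyTb.
Qed.

Lemma mdeg_lt_proper r q : mi_le r q -> r != q -> (mdeg r < mdeg q)%N.
Proof.
move=> rq rn; rewrite -(mdeg_misub rq) -{1}[mdeg r]add0n ltn_add2r lt0n mdeg_eq0.
by rewrite misub_eq0.
Qed.

Lemma mdeg_misub_lt p q : mi_le q p -> q != mi0 m -> (mdeg (misub p q) < mdeg p)%N.
Proof.
move=> qp qn; rewrite -(mdeg_misub qp) -{1}[mdeg (misub p q)]addn0 ltn_add2l.
by rewrite lt0n mdeg_eq0.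
Qed.

Lemma msupp_eq0 p : (msupp p == set0) = (p == mi0 m).
Proof.
apply/eqP/eqP=> [e|->]; last by apply/setP=> i; rewrite !inE ffunE.
by apply/ffunP=> i; rewrite ffunE; apply/eqP; have := in_set0 i; rewrite -e inE => /negbFE.
Qed.

Lemma card_msupp_le q p : mi_le q p -> (#|msupp q| <= #|msupp p|)%N.
Proof.
move=> /mi_leP qp; apply: subset_leq_card; apply/subsetP=> i; rewrite !inE -!lt0n.
by move=> h; apply: leq_trans h (qp i).
Qed.

Lemma mbinom_id q : mbinom q q = 1%N.
Proof. by rewrite /mbinom big1 // => i _; rewrite binn. Qed.

Lemma mbinom0 q : mbinom q (mi0 m) = 1%N.
Proof. by rewrite /mbinom big1 // => i _; rewrite ffunE bin0. Qed.

Lemma fact_inv_misub p q : mi_le q p ->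
  fact_inv q * fact_inv (misub p q) = (mbinom p q)%:R * fact_inv p.
Proof.
move=> /mi_leP qp.
have e : (mbinom p q * ((\prod_i (q i)`!) * (\prod_i (misub p q i)`!)))%N =
         (\prod_i (p i)`!)%N.
  by rewrite /mbinom -!big_split /=; apply: eq_bigr => i _; rewrite misubE bin_fact.
rewrite /fact_inv -invfM -natrM -e [in RHS]natrM [in RHS]invfM mulrA mulfV ?mul1r //.
by rewrite pnatr_eq0 -lt0n prodn_gt0 // => i; rewrite bin_gt0.
Qed.

Lemma fact_inv0 : fact_inv (mi0 m) = 1.
Proof. by rewrite /fact_inv big1 ?invr1 // => i _; rewrite ffunE. Qed.

End MultiIndex.

Arguments mi_le {m}.
Arguments mi_add {m}.
Arguments mi_bnd {m}.

(* Sums over multi-indices are encoded, as in [fps_mul], by summing over the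
   finite type of [n]-bounded index functions. *)
Definition msum (R : zmodType) m n (P : pred (mi m)) (F : mi m -> R) :=
  \sum_(q : {ffun 'I_m -> 'I_n.+1} | P (lowr q)) F (lowr q).

Section MultiSum.
Variables (R : zmodType) (m : nat).
Implicit Types (p q r s x y : mi m) (P Q : pred (mi m)).

Lemma eq_msum n P (F G : mi m -> R) :
  (forall x, P x -> F x = G x) -> msum n P F = msum n P G.
Proof. by move=> e; apply: eq_bigr => q /e. Qed.

Lemma reindex_msum n n' P Q (phi psi : mi m -> mi m) (F : mi m -> R) :
  (forall x, P x -> mi_bnd n x) -> (forall y, Q y -> mi_bnd n' y) ->
  (forall x, P x -> Q (phi x)) -> (forall y, Q y -> P (psi y)) ->
  (forall x, P x -> psi (phi x) = x) -> (forall y, Q y -> phi (psi y) = y) ->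
  msum n P (fun x => F (phi x)) = msum n' Q F.
Proof.
move=> bP bQ PQ QP psiK phiK; rewrite /msum.
pose h (q : {ffun 'I_m -> 'I_n.+1}) := ord_of_mi n' (phi (lowr q)).
pose h' (q : {ffun 'I_m -> 'I_n'.+1}) := ord_of_mi n (psi (lowr q)).
rewrite (reindex_onto h h') /=; last first.
  move=> q Qq; rewrite /h /h' lowr_ord_of_mi; last exact/bP/QP.
  by rewrite phiK // ord_of_mi_lowr.
apply: eq_big => q; last by move=> Pq; rewrite /h lowr_ord_of_mi //; exact/bQ/PQ.
apply/idP/idP => [Pq | /andP[Qh /eqP <-]].
  rewrite /h lowr_ord_of_mi; last exact/bQ/PQ.
  rewrite PQ //= /h' lowr_ord_of_mi; last exact/bQ/PQ.
  by rewrite psiK // ord_of_mi_lowr.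
by rewrite /h' lowr_ord_of_mi; [exact: QP | exact/bP/QP].
Qed.

Lemma msum_widen n n' p (F : mi m -> R) :
  mi_bnd n p -> mi_bnd n' p -> msum n (mi_le^~ p) F = msum n' (mi_le^~ p) F.
Proof.
move=> bp bp'; apply: (@reindex_msum n n' _ _ id id F) => // x xp.
  exact: mi_bnd_le xp bp.
exact: mi_bnd_le xp bp'.
Qed.

Lemma msum_misub p (F : mi m -> R) :
  msum (mdeg p) (mi_le^~ p) (fun r => F (misub p r)) = msum (mdeg p) (mi_le^~ p) F.
Proof.
have bp := mi_bnd_mdeg p.
apply: reindex_msum => // [x xp|x xp|x _|x _|x|x]; try exact: misub_le.
- exact: mi_bnd_le xp bp.
- exact: mi_bnd_le xp bp.
- exact: misubK.
- exact: misubK.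
Qed.

Lemma exchange_msum n p (G : mi m -> mi m -> R) : mi_bnd n p ->
  msum n (mi_le^~ p) (fun q => msum n (mi_le^~ q) (fun r => G r q)) =
  msum n (mi_le^~ p) (fun r => msum n (mi_le^~ (misub p r)) (fun s => G r (mi_add r s))).
Proof.
move=> bp; rewrite /msum.
rewrite (exchange_big_dep (fun r : {ffun 'I_m -> 'I_n.+1} => mi_le (lowr r) p)) /=;
  last by move=> q r qp rq; exact: mi_le_trans rq qp.
apply: eq_bigr => r /mi_leP rp; symmetry.
have := @reindex_msum n n (mi_le^~ (misub p (lowr r)))
   (fun q => mi_le q p && mi_le (lowr r) q) (mi_add (lowr r)) (fun x => misub x (lowr r))
   (G (lowr r)); rewrite /msum => ->.
- by apply: eq_bigl => q.
- move=> x /mi_leP xp; apply/mi_bndP=> i; apply: leq_trans (xp i) _.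
  by rewrite misubE; apply: leq_trans (leq_subr _ _) _; exact/mi_bndP.
- by move=> y /andP[yp _]; exact: mi_bnd_le yp bp.
- move=> x /mi_leP xp; apply/andP; split; apply/mi_leP=> i; rewrite mi_addE.
    by have := xp i; rewrite misubE; have := rp i; lia.
  exact: leq_addr.
- move=> y /andP[/mi_leP yp /mi_leP ry]; apply/mi_leP=> i; rewrite !misubE.
  by have := yp i; have := ry i; lia.
- by move=> x _; apply/ffunP=> i; rewrite misubE mi_addE addKn.
- by move=> y /andP[_ /mi_leP ry]; apply/ffunP=> i; rewrite mi_addE misubE subnKC.
Qed.

End MultiSum.

Section PowerSeries.
Variable m : nat.
Implicit Types (p q r s x y : mi m).

Lemma msum_mull (R : pzRingType) n (P : pred (mi m)) (F : mi m -> R) c :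
  msum n P F * c = msum n P (fun x => F x * c).
Proof. exact: big_distrl. Qed.

Lemma msum_mulr (R : pzRingType) n (P : pred (mi m)) (F : mi m -> R) c :
  c * msum n P F = msum n P (fun x => c * F x).
Proof. exact: big_distrr. Qed.

Lemma fps_mulE (R : pzRingType) (f g : mi m -> R) p :
  fps_mul f g p = msum (mdeg p) (mi_le^~ p) (fun q => f q * g (misub p q)).
Proof. by apply: eq_bigl => q; apply: eq_forallb => i; rewrite ffunE. Qed.

Lemma eq_fps_mul (R : pzRingType) (f1 f2 g1 g2 : mi m -> R) p :
  f1 =1 f2 -> g1 =1 g2 -> fps_mul f1 g1 p = fps_mul f2 g2 p.
Proof. by move=> ef eg; apply: eq_bigr => q _; rewrite ef eg. Qed.

Lemma fps_mulA (R : pzRingType) (f g h : mi m -> R) p :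
  fps_mul (fps_mul f g) h p = fps_mul f (fps_mul g h) p.
Proof.
have bp := mi_bnd_mdeg p.
rewrite !fps_mulE.
transitivity (msum (mdeg p) (mi_le^~ p) (fun q => msum (mdeg p) (mi_le^~ q)
   (fun r => f r * g (misub q r) * h (misub p q)))).
  apply: eq_msum => q qp; rewrite fps_mulE msum_mull.
  by apply: msum_widen; [exact: mi_bnd_mdeg | exact: mi_bnd_le qp bp].
rewrite exchange_msum //; apply: eq_msum => r rp.
rewrite fps_mulE msum_mulr (@msum_widen _ _ _ (mdeg p)); first last.
- by apply: mi_bnd_le bp; exact: misub_le.
- exact: mi_bnd_mdeg.
apply: eq_msum => s sp; rewrite mulrA; congr (_ * g _ * h _); apply/ffunP=> i.
  by rewrite misubE mi_addE addKn.
by rewrite !misubE mi_addE subnDA.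
Qed.

Lemma fps_mul1 (R : pzRingType) (f : mi m -> R) p : fps_mul f (fps_const 1) p = f p.
Proof.
have bp := mi_bnd_mdeg p.
rewrite fps_mulE /msum (bigD1 (ord_of_mi (mdeg p) p)) /=; last first.
  by rewrite lowr_ord_of_mi ?mi_le_refl.
rewrite lowr_ord_of_mi // /fps_const misub_eq0 ?mi_le_refl // eqxx mulr1.
rewrite big1 ?addr0 // => q /andP[qp qne]; rewrite misub_eq0 //.
by case: eqP => [e|_]; [move: qne; rewrite -[X in ord_of_mi _ X]e ord_of_mi_lowr eqxx | rewrite mulr0].
Qed.

Lemma iter_inv_step_fuel (R : unitRingType) (f : mi m -> R) k k' q :
  (mdeg q < k)%N -> (mdeg q < k')%N ->
  iter k (inv_step f) (fun _ => 0) q = iter k' (inv_step f) (fun _ => 0) q.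
Proof.
elim: k k' q => [|k IH] [|k'] q //= hk hk'.
congr (_ * (_ - _)); apply: eq_bigr => r /andP[rq rn].
have lt : (mdeg (misub q (lowr r)) < mdeg q)%N.
  by apply: mdeg_misub_lt => //; apply/mi_leP=> i; rewrite ffunE; exact: (forallP rq i).
by congr (_ * _); apply: IH; [exact: leq_trans lt hk | exact: leq_trans lt hk'].
Qed.

Lemma fps_invE (R : unitRingType) (f : mi m -> R) : fps_inv f =1 inv_step f (fps_inv f).
Proof.
move=> p; rewrite {1}/fps_inv iterS.
congr (_ * (_ - _)); apply: eq_bigr => q /andP[qp qn].
have lt : (mdeg (misub p (lowr q)) < mdeg p)%N.
  by apply: mdeg_misub_lt => //; apply/mi_leP=> i; rewrite ffunE; exact: (forallP qp i).
by congr (_ * _); apply: iter_inv_step_fuel.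
Qed.

Lemma fps_mulV (R : unitRingType) (f : mi m -> R) p :
  f (mi0 m) = 1 -> fps_mul f (fps_inv f) p = fps_const 1 p.
Proof.
move=> f0; have b0 := mi_bnd_le (mi_le0 p) (mi_bnd_mdeg p).
rewrite /fps_mul (bigD1 (ord_of_mi (mdeg p) (mi0 m))) /=; last first.
  by apply/forallP=> i; rewrite ffunE inordK ?ffunE // ltnS; exact/mi_bndP.
have l0 : lowr (ord_of_mi (mdeg p) (mi0 m)) = mi0 m by rewrite lowr_ord_of_mi.
have p0 : misub p (mi0 m) = p by apply/ffunP=> i; rewrite misubE ffunE subn0.
rewrite l0 p0 f0 mul1r fps_invE /inv_step f0 invr1 mul1r /fps_const.
rewrite (eq_bigl (fun q : {ffun 'I_m -> 'I_(mdeg p).+1} =>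
   [forall i, (q i <= p i)%N] && (lowr q != mi0 m))); last first.
  by move=> q; rewrite -[in RHS]l0 (inj_eq (@lowr_inj _ _)).
by rewrite addrC subrKC; case: (p == mi0 m).
Qed.

End PowerSeries.

(* The complete multipartite graph [K_q] has an odd connected component. *)
Definition has_odd_compK m (q : mi m) := (#|msupp q| <= 1)%N || odd (mdeg q).

Section CompleteMultipartite.
Variables (m : nat) (p : mi m).
Local Notation T := (Kvert p).
Local Notation K := (@Kedge m p).
Implicit Types (S : {set T}) (u v w x y : T).

Definition vtx (i : 'I_m) (k : 'I_(p i)) : T := Tagged (fun i => 'I_(p i)) k.
Definition part S (i : 'I_m) : {set 'I_(p i)} := [set k | vtx k \in S].
Definition sizes S : mi m := [ffun i => #|part S i|].

Lemma vtx_tagged x : vtx (tagged x) = x.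
Proof. by case: x. Qed.

Lemma card_sizes S : #|S| = mdeg (sizes S).
Proof.
rewrite /mdeg -sum1_card (eq_bigr (fun i => \sum_(k in part S i) 1)%N); last first.
  by move=> i _; rewrite ffunE sum1_card.
by rewrite sig_big_dep /=; apply: eq_bigl => x; rewrite inE vtx_tagged.
Qed.

Lemma sizes_eq0 S : (sizes S == mi0 m) = (S == set0).
Proof. by rewrite -mdeg_eq0 -card_sizes cards_eq0. Qed.

Lemma sizes_setT : sizes [set: T] = p.
Proof.
apply/ffunP=> i; rewrite ffunE (eq_card (B := predT)) ?card_ord // => k.
by rewrite !inE.
Qed.

Lemma sizes_subset S' S : S' \subset S -> mi_le (sizes S') (sizes S).
Proof.
move=> sub; apply/mi_leP=> i; rewrite !ffunE; apply: subset_leq_card.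
by apply/subsetP=> k; rewrite !inE; exact: (subsetP sub).
Qed.

Lemma msupp_sizes S i : (i \in msupp (sizes S)) = [exists x in S, tag x == i].
Proof.
rewrite inE ffunE -lt0n card_gt0.
apply/set0Pn/existsP=> [[k]|[x /andP[xS /eqP <-]]].
  by rewrite inE => kS; exists (vtx k); rewrite kS /=.
by exists (tagged x); rewrite inE vtx_tagged.
Qed.

Lemma comp_spanning S u w : u \in S -> w \in S -> tag w != tag u -> Defs.comp K S u = S.
Proof.
move=> uS wS wu; apply/setP=> v; rewrite inE; apply/idP/idP => [c|vS].
  have cl : closed (restr K S) S by move=> x y /and3P[-> -> _].
  by rewrite -(closed_connect cl c).
have [/eqP uv|uv] := boolP (tag u == tag v); last by apply: connect1; apply/and3P.
apply: (@connect_trans _ _ w); apply: connect1; apply/and3P; split=> //.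
  by rewrite /Kedge eq_sym.
by rewrite /Kedge -uv.
Qed.

Lemma comp_one_part S u : u \in S -> {in S, forall v, tag v = tag u} ->
  Defs.comp K S u = [set u].
Proof.
move=> uS same; apply/setP=> v; rewrite !inE; apply/idP/idP => [|/eqP ->].
  move=> /connectP[[|w s] /= pth ->] //.
  by move: pth => /andP[/and3P[_ wS]]; rewrite /Kedge (same w) ?eqxx.
exact: connect0.
Qed.

(* An induced subgraph meeting two parts is connected; one meeting a single part is edgeless. *)
Lemma has_odd_compE S : S != set0 -> has_odd_comp K S = has_odd_compK (sizes S).
Proof.
move=> Sn; have [u uS] := set0Pn _ Sn.
rewrite /has_odd_comp /has_odd_compK -card_sizes.
have [w /andP[wS wu]|one] := pickP [pred w | (w \in S) && (tag w != tag u)].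
  have compS x : x \in S -> Defs.comp K S x = S.
    move=> xS; have [/eqP xu|xu] := boolP (tag x == tag u).
      by apply: comp_spanning xS wS _; rewrite xu.
    by apply: comp_spanning xS uS _; rewrite eq_sym.
  have -> : [exists x in S, odd #|Defs.comp K S x|] = odd #|S|.
    apply/existsP/idP=> [[x /andP[xS]]|oS]; first by rewrite compS.
    by exists u; rewrite uS compS.
  suff -> : (#|msupp (sizes S)| <= 1)%N = false by [].
  apply/negbTE; rewrite -ltnNge; apply/card_gt1P; exists (tag u), (tag w).
  rewrite !msupp_sizes eq_sym wu; split=> //; apply/existsP.
    by exists u; rewrite uS eqxx.
  by exists w; rewrite wS eqxx.
have same : {in S, forall v, tag v = tag u}.
  by move=> v vS; have := one v; rewrite /= vS /= => /negbFE /eqP.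
have -> : [exists x in S, odd #|Defs.comp K S x|].
  by apply/existsP; exists u; rewrite uS /= comp_one_part ?cards1.
suff -> : (#|msupp (sizes S)| <= 1)%N by [].
rewrite -(cards1 (tag u)); apply: subset_leq_card; apply/subsetP=> i.
by rewrite msupp_sizes inE => /existsP[x /andP[xS /eqP <-]]; rewrite same.
Qed.

Definition traces S : {dffun forall i : 'I_m, {set 'I_(p i)}} := [ffun i => part S i].
Definition of_traces (f : {dffun forall i : 'I_m, {set 'I_(p i)}}) : {set T} :=
  [set x : T | tagged x \in f (tag x)].

Lemma traces_inj : injective traces.
Proof.
move=> S1 S2 e; apply/setP=> x.
have := congr1 (fun f : {dffun forall i : 'I_m, {set 'I_(p i)}} => f (tag x)) e.
by rewrite !ffunE => /setP /(_ (tagged x)); rewrite !inE vtx_tagged.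
Qed.

Lemma of_tracesK : cancel of_traces traces.
Proof. by move=> f; apply/ffunP=> i; rewrite ffunE; apply/setP=> k; rewrite !inE. Qed.

Lemma card_subsets_sizes S (r : mi m) :
  #|[set S' : {set T} | (S' \subset S) && (sizes S' == r)]| = mbinom (sizes S) r.
Proof.
pose F i := [pred B : {set 'I_(p i)} | (B \subset part S i) && (#|B| == r i)].
rewrite -(card_imset _ traces_inj).
have -> : traces @: [set S' : {set T} | (S' \subset S) && (sizes S' == r)] =
          [set f : {dffun forall i : 'I_m, {set 'I_(p i)}} | f \in family F].
  apply/setP=> f; rewrite inE; apply/imsetP/familyP.
    move=> [S' /[!inE] /andP[sub /eqP sz] ->] i.
    rewrite ffunE inE -sz ffunE eqxx andbT.
    by apply/subsetP=> k; rewrite !inE; exact: (subsetP sub).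
  move=> fF; exists (of_traces f); last by rewrite of_tracesK.
  rewrite inE; apply/andP; split.
    apply/subsetP=> x; rewrite inE => xf.
    by have := fF (tag x); rewrite inE => /andP[/subsetP /(_ _ xf)]; rewrite inE vtx_tagged.
  apply/eqP/ffunP=> i; rewrite ffunE.
  have := fF i; rewrite inE => /andP[_ /eqP <-].
  by apply: eq_card => k; rewrite !inE.
rewrite cardsE card_family foldrE big_map big_enum /mbinom /=.
by apply: eq_bigr => i _; rewrite ffunE -cards_draws; apply: eq_card => B; rewrite !inE.
Qed.

Lemma sum_subsets_sizes (R : zmodType) S (G : mi m -> R) :
  \sum_(S' : {set T} | S' \subset S) G (sizes S') =
  msum (mdeg (sizes S)) (mi_le^~ (sizes S)) (fun r => G r *+ mbinom (sizes S) r).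
Proof.
set s := sizes S; set n := mdeg s.
have bS S' : S' \subset S -> mi_bnd n (sizes S').
  by move=> sub; exact: mi_bnd_le (sizes_subset sub) (mi_bnd_mdeg s).
rewrite (partition_big (fun S' => ord_of_mi n (sizes S')) (fun q => mi_le (lowr q) s));
  last by move=> S' sub; rewrite lowr_ord_of_mi ?sizes_subset ?bS.
apply: eq_bigr => q qs.
rewrite (eq_bigl (mem [set S' : {set T} | (S' \subset S) && (sizes S' == lowr q)])); last first.
  move=> S'; rewrite [RHS]inE; have [sub|] //= := boolP (S' \subset S).
  apply/eqP/eqP=> [<-|->]; last by rewrite ord_of_mi_lowr.
  by rewrite lowr_ord_of_mi ?bS.
rewrite (eq_bigr (fun _ => G (lowr q))); last by move=> S' /[!inE] /andP[_ /eqP ->].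
by rewrite sumr_const card_subsets_sizes.
Qed.

End CompleteMultipartite.

Section SignedACoef.
Variable m : nat.
Implicit Types (p q r s : mi m).

(* [sa_rec] transported to the part sizes of the vertex set. *)
Fixpoint arec (n : nat) q : int :=
  match n with
  | 0 => (q == mi0 m)%:R
  | n'.+1 => if q == mi0 m then 1 else if has_odd_compK q then 0
             else - msum (mdeg q) (fun r => mi_le r q && (r != q))
                      (fun r => arec n' r *+ mbinom q r)
  end.

Definition acoef q : int := arec (mdeg q) q.

Lemma sa_recE p n (S : {set Kvert p}) : sa_rec (@Kedge m p) n S = arec n (sizes S).
Proof.
elim: n S => [|n IH] S /=; first by rewrite sizes_eq0; case: (S == set0).
rewrite sizes_eq0; have [//|Sn] := eqVneq S set0.
rewrite has_odd_compE //; case: (has_odd_compK (sizes S)) => //; congr (- _).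
under eq_bigr do rewrite IH.
set s := sizes S.
pose G r := if r == s then 0 else arec n r.
transitivity (\sum_(S' : {set Kvert p} | S' \subset S) G (sizes S')).
  rewrite big_mkcond [RHS]big_mkcond; apply: eq_bigr => S' _.
  rewrite properE; have [sub|] //= := boolP (S' \subset S).
  rewrite /G; have [e|ne] := eqVneq (sizes S') s.
    have /eqP -> : S' == S by rewrite eqEcard sub !card_sizes e /=.
    by rewrite subxx.
  have [sub2|] //= := boolP (S \subset S').
  by move: ne; rewrite (_ : S' = S) ?eqxx //; apply/eqP; rewrite eqEsubset sub.
rewrite (sum_subsets_sizes S G) /msum big_mkcond [RHS]big_mkcond; apply: eq_bigr => q _.
by rewrite /G; case: (mi_le (lowr q) s); case: eqP; rewrite ?mul0rn.
Qed.

Lemma saE p (S : {set Kvert p}) : sa (@Kedge m p) S = acoef (sizes S).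
Proof. by rewrite /sa sa_recE /acoef card_sizes. Qed.

Lemma arec_fuel n n' r : (mdeg r <= n)%N -> (mdeg r <= n')%N -> arec n r = arec n' r.
Proof.
elim: n n' r => [|n IH] [|n'] r //= h h'.
- by move: h; rewrite leqn0 mdeg_eq0 => ->.
- by move: h'; rewrite leqn0 mdeg_eq0 => ->.
case: (r == mi0 m) => //; case: (has_odd_compK r) => //; congr (- _).
apply: eq_msum => x /andP[xr xn]; congr (_ *+ _).
have lt := mdeg_lt_proper xr xn.
by apply: IH; rewrite -ltnS; apply: leq_trans lt _.
Qed.

Lemma acoef0 : acoef (mi0 m) = 1.
Proof. by rewrite /acoef mdeg0 /= eqxx. Qed.

Lemma acoef_odd q : q != mi0 m -> has_odd_compK q -> acoef q = 0.
Proof.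
move=> qn oq; rewrite /acoef; case E: (mdeg q) => [|k].
  by move: qn; rewrite -mdeg_eq0 E.
by rewrite /= (negbTE qn) oq.
Qed.

Definition binom_acoef_sum p : int :=
  msum (mdeg p) (mi_le^~ p) (fun q => acoef q *+ mbinom p q).

Lemma binom_acoef_sum_even p : p != mi0 m -> ~~ has_odd_compK p ->
  binom_acoef_sum p = 0.
Proof.
move=> pn op; have bp := mi_bnd_mdeg p.
rewrite /binom_acoef_sum /msum (bigD1 (ord_of_mi (mdeg p) p)) /=; last first.
  by rewrite lowr_ord_of_mi ?mi_le_refl.
rewrite lowr_ord_of_mi // mbinom_id mulr1n.
rewrite {1}/acoef; case E: (mdeg p) => [|k]; first by move: pn; rewrite -mdeg_eq0 E.
rewrite /= (negbTE pn) (negbTE op) -E addrC; apply/eqP; rewrite subr_eq0; apply/eqP.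
apply: eq_big => q; first by rewrite -(inj_eq (@lowr_inj _ _)) lowr_ord_of_mi.
move=> /andP[qp qn]; congr (_ *+ _); apply: arec_fuel => //.
rewrite -ltnS -E; apply: mdeg_lt_proper => //.
by move: qn; rewrite -(inj_eq (@lowr_inj _ _)) lowr_ord_of_mi.
Qed.

(* Only [q = 0] contributes: every nonzero [q <= p] lives on at most one part. *)
Lemma binom_acoef_sum_supp1 p : (#|msupp p| <= 1)%N -> binom_acoef_sum p = 1.
Proof.
move=> sp; have b0 := mi_bnd_le (mi_le0 p) (mi_bnd_mdeg p).
rewrite /binom_acoef_sum /msum (bigD1 (ord_of_mi (mdeg p) (mi0 m))) /=; last first.
  by rewrite lowr_ord_of_mi ?mi_le0.
have l0 : lowr (ord_of_mi (mdeg p) (mi0 m)) = mi0 m by rewrite lowr_ord_of_mi.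
rewrite l0 acoef0 mbinom0 big1 ?addr0 // => q /andP[qp qn].
rewrite acoef_odd ?mul0rn //; first by rewrite -l0 (inj_eq (@lowr_inj _ _)).
by rewrite /has_odd_compK (leq_trans (card_msupp_le qp)).
Qed.

End SignedACoef.

Section Series.
Variable m : nat.
Implicit Types (p q r : mi m).

Lemma cosh_varE i p : cosh_var i p =
  (if (msupp p \subset [set i]) && ~~ odd (mdeg p) then fact_inv p else 0)%:P.
Proof.
rewrite /cosh_var.
have -> : [forall j, (j != i) ==> (p j == 0%N)] = (msupp p \subset [set i]).
  apply/forallP/subsetP=> [h j|h j].
    by rewrite !inE => pj; apply: contraNT pj => ji; exact: implyP (h j) ji.
  by apply/implyP=> ji; apply: contraNT ji => pj; rewrite -in_set1 h // inE.
have [sub|] //= := boolP (msupp p \subset [set i]).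
suff -> : mdeg p = p i by case: ifP.
rewrite /mdeg (bigD1 i) //= big1 ?addn0 // => j ji; apply/eqP; apply: contraR ji.
by move=> pj; rewrite -in_set1 (subsetP sub) // inE.
Qed.

Lemma numerE p : numer p =
  (if ~~ odd (mdeg p) && (#|msupp p| <= 1)%N then fact_inv p else 0)%:P.
Proof.
rewrite /numer /fps_const; have [->|pn] := eqVneq p (mi0 m).
  have s0 : msupp (mi0 m) = set0 by apply/eqP; rewrite msupp_eq0.
  under eq_bigr do rewrite cosh_varE s0 sub0set mdeg0 /= fact_inv0.
  rewrite mdeg0 s0 cards0 /= fact_inv0 sumr_const card_ord -polyC_natr -polyCD.
  by rewrite addrNK.
rewrite add0r; have [sp|sp] := leqP #|msupp p| 1.
  have /set0Pn[i0 i0p] : msupp p != set0 by rewrite msupp_eq0.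
  have s1 : msupp p = [set i0].
    by apply/eqP; rewrite eq_sym eqEcard sub1set i0p cards1 sp.
  rewrite (bigD1 i0) //= big1 ?addr0 => [|i ni].
    by rewrite cosh_varE s1 subxx andbC.
  by rewrite cosh_varE s1 sub1set inE eq_sym (negbTE ni) /= polyC0.
rewrite andbF big1 // => i _; rewrite cosh_varE.
suff -> : msupp p \subset [set i] = false by [].
by apply/negbTE; apply: contraTN sp => /subset_leq_card; rewrite cards1 -leqNgt.
Qed.

Definition aseries q : {poly rat} := ((acoef q)%:~R * fact_inv q)%:P.

Lemma aseries_cosh_sum_term p q : mi_le q p -> aseries q * cosh_sum (misub p q) =
  (if ~~ odd (mdeg p) then (acoef q *+ mbinom p q)%:~R * fact_inv p else 0)%:P.
Proof.
move=> qp; rewrite /cosh_sum.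
have le : (mdeg q <= mdeg p)%N by rewrite -(mdeg_misub qp) leq_addl.
have -> : mdeg (misub p q) = (mdeg p - mdeg q)%N by rewrite -(mdeg_misub qp) addnK.
rewrite oddB //; have [oq|_] := boolP (odd (mdeg q)).
  have qn : q != mi0 m by apply: contraTneq oq => ->; rewrite mdeg0.
  rewrite /aseries acoef_odd //; last by rewrite /has_odd_compK oq orbT.
  by rewrite mul0r polyC0 mul0r mul0rn mul0r; case: ifP; rewrite ?polyC0.
rewrite addbF; case: (odd (mdeg p)) => /=; first by rewrite mulr0 polyC0.
by rewrite /aseries -polyCM -mulrA fact_inv_misub // mulrA mulr_natr rmorphMn.
Qed.

(* The even-degree coefficients of [aseries * cosh(x_1+...+x_m)] are binomial
   sums of [acoef], which the recursion for [sa] evaluates. *)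
Lemma aseries_mul_cosh_sum p : fps_mul aseries (@cosh_sum m) p = numer p.
Proof.
rewrite fps_mulE (eq_msum _ (aseries_cosh_sum_term (p := p))) /msum.
rewrite -(big_morph _ (@polyCD _) (@polyC0 _)) numerE; congr (_%:P).
have [op|ep] /= := boolP (odd (mdeg p)); first by rewrite big1.
rewrite -big_distrl /= -(big_morph _ (@intrD _) (mulr0z 1)).
rewrite [\sum_(q | _) _](_ : _ = binom_acoef_sum p) //.
have [sp|sp] := boolP (#|msupp p| <= 1)%N.
  by rewrite binom_acoef_sum_supp1 // mul1r.
rewrite binom_acoef_sum_even ?mul0r //; last by rewrite /has_odd_compK (negbTE sp).
by apply: contra sp; rewrite -msupp_eq0 => /eqP ->; rewrite cards0.
Qed.

(* Summing [sa] over vertex subsets by part sizes gives [sa_poly K_p / p! =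
   sum_(q <= p) acoef q / q! * t^|p - q| / (p - q)!]. *)
Lemma lhsE p : lhs p = fps_mul (@exp_tX m) aseries p.
Proof.
rewrite /lhs /sa_poly -cardsT card_sizes sizes_setT.
under eq_bigr do rewrite saE card_sizes.
rewrite (eq_bigl (fun S : {set Kvert p} => S \subset setT)); last by move=> S; rewrite subsetT.
rewrite (sum_subsets_sizes setT (fun r => (acoef r)%:~R *: 'X^(mdeg p - mdeg r))).
rewrite sizes_setT fps_mulE -[RHS]msum_misub /msum scaler_sumr; apply: eq_bigr => q qp.
set r := lowr q; rewrite misubK // /exp_tX /aseries.
have -> : mdeg (misub p r) = (mdeg p - mdeg r)%N by rewrite -(mdeg_misub qp) addnK.
rewrite mulrC mul_polyC scalerA -scaler_nat !scalerA; congr (_ *: _).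
by rewrite -[RHS]mulrA fact_inv_misub //; ring.
Qed.

Lemma cosh_sum0 : @cosh_sum m (mi0 m) = 1.
Proof. by rewrite /cosh_sum mdeg0 /= fact_inv0. Qed.

End Series.

Theorem mainTheorem9 (m : nat) (hm : (1 <= m)%N) (p : {ffun 'I_m -> nat}) :
  lhs p = rhs p.
Proof.
have cosh_sumV : fps_mul (@cosh_sum m) (fps_inv (@cosh_sum m)) =1 fps_const 1.
  by move=> q; rewrite fps_mulV // cosh_sum0.
rewrite lhsE /rhs -fps_mul1 -(eq_fps_mul p (frefl _) cosh_sumV) -fps_mulA.
apply: eq_fps_mul => // q; rewrite fps_mulA.
by apply: eq_fps_mul => // r; exact: aseries_mul_cosh_sum.
Qed.
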